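(* Let $G$ be a quasi-semi-simple group, $H$ a Hausdorff topological group, and $\phi:G\to H$ a continuous injective homomorphism. Then $\phi(G)$ is closed in $H$ and $\phi:G\to\phi(G)$ is a homeomorphism (with $\phi(G)$ carrying the subspace topology).
   Context: A locally compact group $G$ is quasi-semi-simple (qss) if there is a closed subgroup $A<G$ such that (i) $G=CAC$ for some compact $C\subset G$; (ii) for every net $(a_\alpha)$ in $A$ converging to infinity there is a subnet $(a_\beta)$ such that $U^{(a_\beta)}_+$ is not precompact and the subgroup generated by $U^{(a_\beta)}_+,U^{(a_\beta)}_-,U^{(a_\beta)}_0$ is dense in $G$, where for a net $(g_\alpha)$: $U^{(g_\alpha)}_+=\{x: g_\alpha^{-1}xg_\alpha\to e\}$, $U^{(g_\alpha)}_-=\{x: g_\alpha xg_\alpha^{-1}\to e\}$, and $U^{(g_\alpha)}_0$ is the set of $x$ such that every subnet of each of the nets $(g_\alpha^{-1}xg_\alpha)$, $(g_\alpha xg_\alpha^{-1})$ admits a converging subnet. *)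

From Stdlib Require Import List.

Record TopGroup := {
  tg_car :> Type;
  tg_mul : tg_car -> tg_car -> tg_car;
  tg_inv : tg_car -> tg_car;
  tg_one : tg_car;
  tg_open : (tg_car -> Prop) -> Prop;
  tg_mulA : forall x y z, tg_mul x (tg_mul y z) = tg_mul (tg_mul x y) z;
  tg_mul1g : forall x, tg_mul tg_one x = x;
  tg_mulVg : forall x, tg_mul (tg_inv x) x = tg_one;
  tg_open_full : tg_open (fun _ => True);
  tg_open_inter : forall U V, tg_open U -> tg_open V -> tg_open (fun x => U x /\ V x);
  tg_open_union : forall F : (tg_car -> Prop) -> Prop,
      (forall U, F U -> tg_open U) -> tg_open (fun x => exists U, F U /\ U x);
  tg_mul_cont : forall U x y, tg_open U -> U (tg_mul x y) ->
      exists V W, tg_open V /\ tg_open W /\ V x /\ W y /\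
        (forall a b, V a -> W b -> U (tg_mul a b));
  tg_inv_cont : forall U, tg_open U -> tg_open (fun x => U (tg_inv x))
}.

Arguments tg_mul {_}.
Arguments tg_inv {_}.
Arguments tg_one {_}.
Arguments tg_open {_}.

Section Topo.
Variable G : TopGroup.

Definition closed (S : G -> Prop) : Prop := tg_open (fun x => ~ S x).

Definition closure (S : G -> Prop) : G -> Prop :=
  fun x => forall U, tg_open U -> U x -> exists y, U y /\ S y.

Definition compact (K : G -> Prop) : Prop :=
  forall F : (G -> Prop) -> Prop,
    (forall U, F U -> tg_open U) ->
    (forall x, K x -> exists U, F U /\ U x) ->
    exists l : list (G -> Prop), (forall U, In U l -> F U) /\
      (forall x, K x -> exists U, In U l /\ U x).

Definition precompact (S : G -> Prop) : Prop := compact (closure S).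

Definition hausdorff : Prop :=
  forall x y : G, x <> y -> exists U V, tg_open U /\ tg_open V /\ U x /\ V y /\
    (forall z, U z -> V z -> False).

Definition locally_compact : Prop :=
  forall x : G, exists U K, tg_open U /\ U x /\ compact K /\ (forall y, U y -> K y).

Definition LCGroup : Prop := hausdorff /\ locally_compact.

Definition subgroup (S : G -> Prop) : Prop :=
  S tg_one /\ (forall x y, S x -> S y -> S (tg_mul x y)) /\ (forall x, S x -> S (tg_inv x)).

Definition generated (T : G -> Prop) : G -> Prop :=
  fun x => forall S, subgroup S -> (forall y, T y -> S y) -> S x.

Definition dense (S : G -> Prop) : Prop := forall x, closure S x.

Definition directed {D : Type} (le : D -> D -> Prop) : Prop :=
  inhabited D /\ (forall d, le d d) /\ (forall a b c, le a b -> le b c -> le a c) /\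
  (forall a b, exists c, le a c /\ le b c).

Definition net_conv {D : Type} (le : D -> D -> Prop) (a : D -> G) (x : G) : Prop :=
  forall U, tg_open U -> U x -> exists d0, forall d, le d0 d -> U (a d).

Definition net_to_infty {D : Type} (le : D -> D -> Prop) (a : D -> G) : Prop :=
  forall K, compact K -> exists d0, forall d, le d0 d -> ~ K (a d).

(* b (indexed by D') is a subnet of a (indexed by D), in the sense of Willard *)
Definition subnet {D D' : Type} (le : D -> D -> Prop) (le' : D' -> D' -> Prop)
  (a : D -> G) (b : D' -> G) : Prop :=
  exists h : D' -> D,
    (forall d, exists d0', forall d', le' d0' d' -> le d (h d')) /\
    (forall d', b d' = a (h d')).

Definition has_conv_subnet {D : Type} (le : D -> D -> Prop) (a : D -> G) : Prop :=
  exists (D' : Type) (le' : D' -> D' -> Prop) (b : D' -> G),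
    directed le' /\ subnet le le' a b /\ exists y, net_conv le' b y.

Definition every_subnet_has_conv_subnet {D : Type} (le : D -> D -> Prop) (a : D -> G) : Prop :=
  forall (D' : Type) (le' : D' -> D' -> Prop) (b : D' -> G),
    directed le' -> subnet le le' a b -> has_conv_subnet le' b.

Definition Uplus {D : Type} (le : D -> D -> Prop) (g : D -> G) : G -> Prop :=
  fun x => net_conv le (fun d => tg_mul (tg_mul (tg_inv (g d)) x) (g d)) tg_one.

Definition Uminus {D : Type} (le : D -> D -> Prop) (g : D -> G) : G -> Prop :=
  fun x => net_conv le (fun d => tg_mul (tg_mul (g d) x) (tg_inv (g d))) tg_one.

Definition Uzero {D : Type} (le : D -> D -> Prop) (g : D -> G) : G -> Prop :=
  fun x =>
    every_subnet_has_conv_subnet le (fun d => tg_mul (tg_mul (tg_inv (g d)) x) (g d)) /\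
    every_subnet_has_conv_subnet le (fun d => tg_mul (tg_mul (g d) x) (tg_inv (g d))).

Definition qss : Prop :=
  LCGroup /\
  exists A : G -> Prop, subgroup A /\ closed A /\
  exists C : G -> Prop, compact C /\
    (forall g, exists c1 a c2, C c1 /\ A a /\ C c2 /\ g = tg_mul (tg_mul c1 a) c2) /\
    (forall (D : Type) (le : D -> D -> Prop) (a : D -> G),
        directed le -> (forall d, A (a d)) -> net_to_infty le a ->
        exists (D' : Type) (le' : D' -> D' -> Prop) (b : D' -> G),
          directed le' /\ subnet le le' a b /\
          ~ precompact (Uplus le' b) /\
          dense (generated (fun x => Uplus le' b x \/ Uminus le' b x \/ Uzero le' b x))).

End Topo.

Arguments closed {G}.
Arguments compact {G}.

Definition continuous {G H : TopGroup} (f : G -> H) : Prop :=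
  forall V, tg_open V -> tg_open (fun x => V (f x)).

Definition group_hom {G H : TopGroup} (f : G -> H) : Prop :=
  forall x y, f (tg_mul x y) = tg_mul (f x) (f y).

From Stdlib Require Import List Classical FunctionalExtensionality PropExtensionality.

(* It suffices that phi is a closed map: if [h] lies in the closure of [phi P],
   then [h = phi x] for some [x] in the closure of [P].  Otherwise [phi P] stays
   away from [h] on every compact set, so, writing [G = C A C], there are
   [c1 a c2] with [a] arbitrarily far out in [A] and [phi (c1 a c2)] arbitrarily
   close to [h].  Passing to cluster points of [c1] and [c2] in the compact [C]
   yields a net [a_d] in [A] tending to infinity with [phi a_d] converging to some
   [h'], and for a subnet [b] as in the definition of quasi-semi-simplicity the
   group [U_+] is then trivial, hence precompact: a contradiction. *)

Section GroupAlgebra.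
Variable X : TopGroup.

Lemma mulgV (x : X) : tg_mul x (tg_inv x) = tg_one.
Proof.
  rewrite <- (tg_mul1g X (tg_mul x (tg_inv x))).
  rewrite <- (tg_mulVg X (tg_inv x)) at 1.
  rewrite <- tg_mulA, (tg_mulA X (tg_inv x) x (tg_inv x)), tg_mulVg, tg_mul1g.
  apply tg_mulVg.
Qed.

Lemma mulg1 (x : X) : tg_mul x tg_one = x.
Proof. rewrite <- (tg_mulVg X x), tg_mulA, mulgV. apply tg_mul1g. Qed.

Lemma mulKg (x y : X) : tg_mul (tg_inv x) (tg_mul x y) = y.
Proof. rewrite tg_mulA, tg_mulVg. apply tg_mul1g. Qed.

Lemma mulVKg (x y : X) : tg_mul x (tg_mul (tg_inv x) y) = y.
Proof. rewrite tg_mulA, mulgV. apply tg_mul1g. Qed.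

Lemma conjg_eq1 (t v : X) : tg_mul (tg_mul (tg_inv t) v) t = tg_one -> v = tg_one.
Proof.
  intro E.
  assert (Ev : v = tg_mul (tg_mul t (tg_mul (tg_mul (tg_inv t) v) t)) (tg_inv t)).
  { rewrite <- !tg_mulA, mulgV, mulg1. symmetry. apply mulVKg. }
  rewrite Ev, E, mulg1. apply mulgV.
Qed.

End GroupAlgebra.

Section Homomorphisms.
Variables (G H : TopGroup) (phi : G -> H).
Hypothesis phi_hom : group_hom phi.

Lemma hom_one : phi tg_one = tg_one.
Proof.
  assert (E : phi tg_one = tg_mul (phi tg_one) (phi tg_one)).
  { rewrite <- phi_hom, tg_mul1g. reflexivity. }
  rewrite <- (mulKg H (phi tg_one) (phi tg_one)) at 1. rewrite <- E. apply tg_mulVg.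
Qed.

Lemma hom_inv (x : G) : phi (tg_inv x) = tg_inv (phi x).
Proof.
  rewrite <- (mulg1 H (phi (tg_inv x))), <- (mulgV H (phi x)), tg_mulA, <- phi_hom,
    tg_mulVg, hom_one.
  apply tg_mul1g.
Qed.

End Homomorphisms.

Lemma list_choice (A B : Type) (Good : B -> Prop) (R : A -> B -> Prop) (l : list A) :
  (forall x, In x l -> exists y, Good y /\ R x y) ->
  exists L, (forall y, In y L -> Good y) /\ forall x, In x l -> exists y, In y L /\ R x y.
Proof.
  induction l as [|x l IH]; intro Hl.
  - exists nil. split; intros ? [].
  - destruct (Hl x (or_introl eq_refl)) as [y [Gy Rxy]].
    destruct IH as [L [HL1 HL2]]. { intros x' Hx'; apply Hl; right; exact Hx'. }
    exists (y :: L). split.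
    + intros y' [<-|Hy']; auto.
    + intros x' [<-|Hx']; [exists y; split; [left|]; auto|].
      destruct (HL2 x' Hx') as [y' [? ?]]. exists y'; split; [right|]; auto.
Qed.

Section Compactness.
Variable X : TopGroup.

Lemma open_nbhd_list (T : Type) (x : X) (Q : (X -> Prop) -> T -> Prop) (l : list T) :
  (forall V V' t, (forall z, V' z -> V z) -> Q V t -> Q V' t) ->
  (forall t, In t l -> exists V, tg_open V /\ V x /\ Q V t) ->
  exists V, tg_open V /\ V x /\ forall t, In t l -> Q V t.
Proof.
  intros Qanti. induction l as [|t l IH]; intro Hl.
  - exists (fun _ => True). split; [apply tg_open_full|]. split; [exact I|intros ? []].
  - destruct IH as [V0 [HV0 [V0x HV0l]]]. { intros t' Ht'; apply Hl; right; exact Ht'. }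
    destruct (Hl t (or_introl eq_refl)) as [V [HV [Vx QVt]]].
    exists (fun z => V0 z /\ V z). split; [apply tg_open_inter; assumption|].
    split; [split; assumption|].
    intros t' [<-|Ht']; eapply Qanti; [| exact QVt | |apply (HV0l t' Ht')]; intros z []; auto.
Qed.

Lemma compact_empty : compact (fun _ : X => False).
Proof. intros F _ _. exists nil. split; intros ? []. Qed.

Lemma compact_subsingleton (K : X -> Prop) :
  (forall x y, K x -> K y -> x = y) -> compact K.
Proof.
  intros HK F _ Hcov. destruct (classic (exists x, K x)) as [[x Kx]|Hno].
  - destruct (Hcov x Kx) as [U [FU Ux]]. exists (U :: nil).
    split; [intros ? [<-|[]]; exact FU|].
    intros y Ky. exists U. rewrite (HK y x Ky Kx). split; [left|]; auto.
  - exists nil. split; [intros ? []|]. intros x Kx. exfalso; eauto.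
Qed.

Lemma compact_union (K1 K2 : X -> Prop) :
  compact K1 -> compact K2 -> compact (fun x => K1 x \/ K2 x).
Proof.
  intros H1 H2 F HF Hcov.
  destruct (H1 F HF) as [l1 [A1 B1]]. { intros x Kx; apply Hcov; left; exact Kx. }
  destruct (H2 F HF) as [l2 [A2 B2]]. { intros x Kx; apply Hcov; right; exact Kx. }
  exists (l1 ++ l2). split.
  - intros U HU. apply in_app_iff in HU. destruct HU; auto.
  - intros x [Kx|Kx]; [destruct (B1 x Kx) as [U [? ?]]|destruct (B2 x Kx) as [U [? ?]]];
      exists U; rewrite in_app_iff; auto.
Qed.

Lemma tube_mul (K : X -> Prop) (F : (X -> Prop) -> Prop) (a : X) :
  compact K -> (forall U, F U -> tg_open U) ->
  (forall b, K b -> exists U, F U /\ U (tg_mul a b)) ->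
  exists V L, tg_open V /\ V a /\ (forall U, In U L -> F U) /\
    forall s t, V s -> K t -> exists U, In U L /\ U (tg_mul s t).
Proof.
  intros HK HF Hcov.
  set (Fa := fun W : X -> Prop => tg_open W /\ exists V U, tg_open V /\ V a /\ F U /\
               forall s t, V s -> W t -> U (tg_mul s t)).
  destruct (HK Fa) as [l [Hl HlK]].
  - intros W [HW _]; exact HW.
  - intros b Kb. destruct (Hcov b Kb) as [U [FU Uab]].
    destruct (tg_mul_cont X U a b (HF U FU) Uab) as [V [W [HV [HW [Va [Wb HVW]]]]]].
    exists W. split; [split; [exact HW|exists V, U; auto]|exact Wb].
  - destruct (open_nbhd_list _ a
      (fun V W => exists U, F U /\ forall s t, V s -> W t -> U (tg_mul s t)) l)
      as [V [HV [Va HVl]]].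
    + intros V V' W HV'V [U [FU HU]]. exists U. split; auto.
    + intros W HW. destruct (Hl W HW) as [_ [V [U [HV [Va [FU HU]]]]]].
      exists V. split; [|split]; auto. exists U; auto.
    + destruct (list_choice _ _ F (fun W U => forall s t, V s -> W t -> U (tg_mul s t)) l HVl)
        as [L [HL1 HL2]].
      exists V, L. split; [|split; [|split]]; auto.
      intros s t Vs Kt. destruct (HlK t Kt) as [W [HW Wt]].
      destruct (HL2 W HW) as [U [HU HU']]. exists U; auto.
Qed.

Lemma compact_mul (K1 K2 : X -> Prop) :
  compact K1 -> compact K2 ->
  compact (fun z => exists a b, K1 a /\ K2 b /\ z = tg_mul a b).
Proof.
  intros H1 H2 F HF Hcov.
  set (Tube := fun V : X -> Prop => tg_open V /\ exists L : list (X -> Prop),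
         (forall U, In U L -> F U) /\
         forall s t, V s -> K2 t -> exists U, In U L /\ U (tg_mul s t)).
  destruct (H1 Tube) as [l [Hl HlK]].
  - intros V [HV _]; exact HV.
  - intros a Ka.
    destruct (tube_mul K2 F a H2 HF) as [V [L [HV [Va [HL HVL]]]]].
    { intros b Kb. apply Hcov. exists a, b; auto. }
    exists V. split; [split; [exact HV|exists L; auto]|exact Va].
  - destruct (list_choice _ _ (fun L => forall U, In U L -> F U)
      (fun V L => forall s t, V s -> K2 t -> exists U, In U L /\ U (tg_mul s t)) l)
      as [LL [HLL1 HLL2]].
    { intros V HV. destruct (Hl V HV) as [_ [L [? ?]]]. exists L; auto. }
    exists (concat LL). split.
    + intros U HU. apply in_concat in HU. destruct HU as [L [HL HUL]]. exact (HLL1 L HL U HUL).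
    + intros z [a [b [Ka [Kb ->]]]]. destruct (HlK a Ka) as [V [HV Va]].
      destruct (HLL2 V HV) as [L [HL HVL]]. destruct (HVL a b Va Kb) as [U [HU Uab]].
      exists U. split; [apply in_concat; exists L; auto|exact Uab].
Qed.

End Compactness.

Section Topology.
Variable X : TopGroup.

Lemma open_of_nbhd (S : X -> Prop) :
  (forall x, S x -> exists U, tg_open U /\ U x /\ forall y, U y -> S y) -> tg_open S.
Proof.
  intro HS.
  replace S with (fun x => exists U, (tg_open U /\ forall y, U y -> S y) /\ U x).
  - apply tg_open_union. intros U [HU _]; exact HU.
  - apply functional_extensionality; intro x. apply propositional_extensionality.
    split; [intros [U [[_ HU] Ux]]; auto|].
    intro Sx. destruct (HS x Sx) as [U [HU [Ux HUS]]]. exists U; auto.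
Qed.

Lemma compact_cluster (K : X -> Prop) (I : Type) (ok : I -> Prop) (B : I -> X -> Prop) :
  compact K -> (exists i, ok i) ->
  (forall i j, ok i -> ok j -> exists k, ok k /\ forall z, B k z -> B i z /\ B j z) ->
  (forall i, ok i -> exists z, K z /\ B i z) ->
  exists y, K y /\ forall N, tg_open N -> N y -> forall i, ok i ->
    exists z, K z /\ N z /\ B i z.
Proof.
  intros HK [i0 Hi0] Hdir Hmeet. apply NNPP; intro Hno.
  destruct (HK (fun N => tg_open N /\ exists i, ok i /\ forall z, K z -> N z -> ~ B i z))
    as [l [Hl HlK]].
  - intros N [HN _]; exact HN.
  - intros x Kx. apply NNPP; intro Hx. apply Hno. exists x. split; [exact Kx|].
    intros N HN Nx i Hi. apply NNPP; intro Hz. apply Hx. exists N.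
    split; [split; [exact HN|exists i; split; [exact Hi|]]|exact Nx].
    intros z Kz Nz Bz. apply Hz. eauto.
  - assert (Hfine : exists k, ok k /\ forall N, In N l -> forall z, K z -> N z -> ~ B k z).
    { clear HlK. induction l as [|N l IH].
      - exists i0. split; [exact Hi0|intros ? []].
      - destruct IH as [k [Hk Hkl]]. { intros U HU; apply Hl; right; exact HU. }
        destruct (Hl N (or_introl eq_refl)) as [_ [i [Hi HiN]]].
        destruct (Hdir i k Hi Hk) as [k' [Hk' Hk'ik]].
        exists k'. split; [exact Hk'|]. intros N' [<-|HN'] z Kz Nz Bz;
          destruct (Hk'ik z Bz); [exact (HiN z Kz Nz ltac:(auto))|exact (Hkl N' HN' z Kz Nz ltac:(auto))]. }
    destruct Hfine as [k [Hk Hkl]]. destruct (Hmeet k Hk) as [z [Kz Bz]].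
    destruct (HlK z Kz) as [N [HN Nz]]. exact (Hkl N HN z Kz Nz Bz).
Qed.

Lemma closure_sub_point (S : X -> Prop) (z y : X) :
  hausdorff X -> (forall x, S x -> x = z) -> closure X S y -> y = z.
Proof.
  intros HX HS Hy. apply NNPP; intro Hne.
  destruct (HX _ _ Hne) as [U [V [HU [HV [Uy [Vz Hd]]]]]].
  destruct (Hy U HU Uy) as [x [Ux Sx]]. rewrite (HS x Sx) in Ux. exact (Hd z Ux Vz).
Qed.

Lemma net_conv_unique (D : Type) (le : D -> D -> Prop) (u : D -> X) (x y : X) :
  hausdorff X -> directed le -> net_conv X le u x -> net_conv X le u y -> x = y.
Proof.
  intros HX [_ [_ [_ Hub]]] Hx Hy. apply NNPP; intro Hne.
  destruct (HX _ _ Hne) as [U [V [HU [HV [Ux [Vy Hd]]]]]].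
  destruct (Hx U HU Ux) as [d1 Hd1]. destruct (Hy V HV Vy) as [d2 Hd2].
  destruct (Hub d1 d2) as [d [H1 H2]]. exact (Hd _ (Hd1 d H1) (Hd2 d H2)).
Qed.

Lemma net_conv_conj (D : Type) (le : D -> D -> Prop) (u : D -> X) (t v : X) :
  net_conv X le u t ->
  net_conv X le (fun d => tg_mul (tg_mul (tg_inv (u d)) v) (u d))
    (tg_mul (tg_mul (tg_inv t) v) t).
Proof.
  intros Hu U HU Ut.
  destruct (tg_mul_cont X U _ _ HU Ut) as [V1 [V2 [HV1 [HV2 [V1x [V2t HV12]]]]]].
  destruct (tg_mul_cont X V1 _ _ HV1 V1x) as [V3 [V4 [HV3 [HV4 [V3t [V4v HV34]]]]]].
  destruct (Hu (fun s => V3 (tg_inv s) /\ V2 s)) as [d0 Hd0].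
  - apply tg_open_inter; [apply tg_inv_cont|]; assumption.
  - split; assumption.
  - exists d0. intros d Hd. destruct (Hd0 d Hd). auto.
Qed.

End Topology.

Lemma net_conv_continuous (X Y : TopGroup) (f : X -> Y) (D : Type) (le : D -> D -> Prop)
    (u : D -> X) (x : X) :
  continuous f -> net_conv X le u x -> net_conv Y le (fun d => f (u d)) (f x).
Proof. intros Hf Hu V HV Vx. exact (Hu _ (Hf V HV) Vx). Qed.

Lemma subnet_net_conv (X Y : TopGroup) (f : X -> Y) (D D' : Type) (le : D -> D -> Prop)
    (le' : D' -> D' -> Prop) (a : D -> X) (b : D' -> X) (y : Y) :
  subnet X le le' a b -> net_conv Y le (fun d => f (a d)) y ->
  net_conv Y le' (fun d => f (b d)) y.
Proof.
  intros [s [Hcof Hb]] Ha V HV Vy. destruct (Ha V HV Vy) as [d0 Hd0].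
  destruct (Hcof d0) as [d0' Hd0']. exists d0'. intros d' Hd'.
  rewrite Hb. exact (Hd0 _ (Hd0' d' Hd')).
Qed.

Section Embedding.
Variables (G H : TopGroup) (phi : G -> H).
Hypotheses (H_hausdorff : hausdorff H) (phi_cont : continuous phi) (phi_hom : group_hom phi).

Definition image (P : G -> Prop) : H -> Prop := fun y => exists x, P x /\ y = phi x.

Lemma compact_closure_image (K P : G -> Prop) (h : H) :
  compact K -> (forall W, tg_open W -> W h -> exists g, K g /\ P g /\ W (phi g)) ->
  exists y, closure G P y /\ phi y = h.
Proof.
  intros HK Hmeet.
  destruct (compact_cluster G K (H -> Prop) (fun W => tg_open W /\ W h)
              (fun W z => P z /\ W (phi z)) HK) as [y [_ Hy]].
  - exists (fun _ => True). split; [apply tg_open_full|exact I].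
  - intros W W' [HW Wh] [HW' W'h]. exists (fun y => W y /\ W' y).
    split; [split; [apply tg_open_inter|]; auto|]. intros z [Pz [Wz W'z]]; auto.
  - intros W [HW Wh]. destruct (Hmeet W HW Wh) as [g [Kg [Pg Wg]]]. exists g; auto.
  - exists y. split.
    + intros N HN Ny. destruct (Hy N HN Ny (fun _ => True)) as [z [_ [Nz [Pz _]]]].
      * split; [apply tg_open_full|exact I].
      * exists z; auto.
    + apply NNPP; intro Hne. destruct (H_hausdorff _ _ Hne) as [U [V [HU [HV [Uy [Vh Hd]]]]]].
      destruct (Hy (fun g => U (phi g)) (phi_cont U HU) Uy V (conj HV Vh))
        as [z [_ [Uz [_ Vz]]]].
      exact (Hd _ Uz Vz).
Qed.

Definition escaping_limit (Q : G -> Prop) (h : H) : Prop :=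
  forall W, tg_open W -> W h -> forall K, compact K -> exists a, Q a /\ ~ K a /\ W (phi a).

Record escape_stage (Q : G -> Prop) (h : H) := EscapeStage {
  stage_compact : G -> Prop;
  stage_nbhd : H -> Prop;
  stage_point : G;
  stage_compactP : compact stage_compact;
  stage_nbhdP : tg_open stage_nbhd /\ stage_nbhd h;
  stage_pointP : Q stage_point /\ ~ stage_compact stage_point /\ stage_nbhd (phi stage_point)
}.

Arguments stage_compact {Q h}.
Arguments stage_nbhd {Q h}.
Arguments stage_point {Q h}.

Definition stage_le (Q : G -> Prop) (h : H) (s t : escape_stage Q h) : Prop :=
  (forall x, stage_compact s x -> stage_compact t x) /\
  (forall y, stage_nbhd t y -> stage_nbhd s y).

Lemma escape_stage_exists (Q : G -> Prop) (h : H) K W :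
  escaping_limit Q h -> compact K -> tg_open W -> W h ->
  exists s : escape_stage Q h, stage_compact s = K /\ stage_nbhd s = W.
Proof.
  intros Hesc HK HW Wh. destruct (Hesc W HW Wh K HK) as [a [Qa [nKa Wa]]].
  exists (EscapeStage Q h K W a HK (conj HW Wh) (conj Qa (conj nKa Wa))). auto.
Qed.

Lemma escaping_limit_net (Q : G -> Prop) (h : H) :
  escaping_limit Q h ->
  exists (D : Type) (le : D -> D -> Prop) (a : D -> G),
    directed le /\ (forall d, Q (a d)) /\ net_to_infty G le a /\
    net_conv H le (fun d => phi (a d)) h.
Proof.
  intro Hesc. exists (escape_stage Q h), (stage_le Q h), stage_point.
  split; [split; [|split; [|split]]|split; [|split]].
  - destruct (escape_stage_exists Q h _ _ Hesc (compact_empty G) (tg_open_full H) I) as [s _].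
    exact (inhabits s).
  - intro s. split; auto.
  - intros r s t [? ?] [? ?]. split; auto.
  - intros s t.
    destruct (escape_stage_exists Q h (fun x => stage_compact s x \/ stage_compact t x)
                (fun y => stage_nbhd s y /\ stage_nbhd t y) Hesc) as [u [EK EW]].
    + apply compact_union; apply stage_compactP.
    + apply tg_open_inter; [apply (stage_nbhdP _ _ s)|apply (stage_nbhdP _ _ t)].
    + split; [apply (stage_nbhdP _ _ s)|apply (stage_nbhdP _ _ t)].
    + exists u. unfold stage_le. rewrite EK, EW. split; split; intros; tauto.
  - intro s. apply (stage_pointP _ _ s).
  - intros K HK. destruct (escape_stage_exists Q h K _ Hesc HK (tg_open_full H) I) as [s0 [EK _]].
    exists s0. intros s [Hle _] Ks. apply (stage_pointP _ _ s). apply Hle. rewrite EK. exact Ks.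
  - intros W HW Wh. destruct (escape_stage_exists Q h _ W Hesc (compact_empty G) HW Wh) as [s0 [_ EW]].
    exists s0. intros s [_ Hle]. rewrite <- EW. apply Hle. apply (stage_pointP _ _ s).
Qed.

Section Strip.
Variables (C : G -> Prop) (far : (G -> Prop) -> G -> Prop).
Hypotheses (C_compact : compact C)
  (far_anti : forall K K' g, (forall x, K x -> K' x) -> far K' g -> far K g).

Lemma escape_cluster (m : G -> G -> G) (h : H) :
  (forall W, tg_open W -> W h -> forall K, compact K ->
     exists c g, C c /\ far K g /\ W (phi (m c g))) ->
  exists c, C c /\ forall N, tg_open N -> N c -> forall W, tg_open W -> W h ->
    forall K, compact K -> exists c' g, N c' /\ far K g /\ W (phi (m c' g)).
Proof.
  intro Hesc.
  destruct (compact_cluster G C ((H -> Prop) * (G -> Prop))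
              (fun p => tg_open (fst p) /\ fst p h /\ compact (snd p))
              (fun p c => exists g, far (snd p) g /\ fst p (phi (m c g))) C_compact)
    as [c [Cc Hc]].
  - exists (fun _ => True, fun _ => False). split; [apply tg_open_full|split; [exact I|apply compact_empty]].
  - intros [W K] [W' K'] [HW [Wh HK]] [HW' [W'h HK']]; simpl in *.
    exists (fun y => W y /\ W' y, fun x => K x \/ K' x); simpl.
    split; [split; [apply tg_open_inter|split; [|apply compact_union]]; auto|].
    intros z [g [Fg [Wg W'g]]].
    split; exists g; (split; [eapply far_anti; [|exact Fg]; simpl; tauto|auto]).
  - intros [W K] [HW [Wh HK]]; simpl in *.
    destruct (Hesc W HW Wh K HK) as [c [g [Cc [Fg Wg]]]]. exists c; split; [|exists g]; auto.
  - exists c. split; [exact Cc|]. intros N HN Nc W HW Wh K HK.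
    destruct (Hc N HN Nc (W, K) (conj HW (conj Wh HK))) as [c' [_ [Nc' [g [Fg Wg]]]]].
    exists c', g. auto.
Qed.

Lemma escape_strip_left (h : H) :
  (forall W, tg_open W -> W h -> forall K, compact K ->
     exists c g, C c /\ far K g /\ W (phi (tg_mul c g))) ->
  exists c, C c /\ forall W, tg_open W -> W (tg_mul (tg_inv (phi c)) h) ->
    forall K, compact K -> exists g, far K g /\ W (phi g).
Proof.
  intro Hesc. destruct (escape_cluster tg_mul h Hesc) as [c [Cc Hc]].
  exists c. split; [exact Cc|]. intros W' HW' W'h K HK.
  destruct (tg_mul_cont H W' _ _ HW' W'h) as [V [W [HV [HW [Vc [Wh HVW]]]]]].
  destruct (Hc (fun u => V (tg_inv (phi u))) (phi_cont _ (tg_inv_cont H V HV)) Vc W HW Wh K HK)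
    as [c' [g [Vc' [Fg Wg]]]].
  exists g. split; [exact Fg|]. specialize (HVW _ _ Vc' Wg).
  rewrite phi_hom, mulKg in HVW. exact HVW.
Qed.

Lemma escape_strip_right (h : H) :
  (forall W, tg_open W -> W h -> forall K, compact K ->
     exists c g, C c /\ far K g /\ W (phi (tg_mul g c))) ->
  exists c, C c /\ forall W, tg_open W -> W (tg_mul h (tg_inv (phi c))) ->
    forall K, compact K -> exists g, far K g /\ W (phi g).
Proof.
  intro Hesc. destruct (escape_cluster (fun c g => tg_mul g c) h Hesc) as [c [Cc Hc]].
  exists c. split; [exact Cc|]. intros W' HW' W'h K HK.
  destruct (tg_mul_cont H W' _ _ HW' W'h) as [W [V [HW [HV [Wh [Vc HWV]]]]]].
  destruct (Hc (fun u => V (tg_inv (phi u))) (phi_cont _ (tg_inv_cont H V HV)) Vc W HW Wh K HK)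
    as [c' [g [Vc' [Fg Wg]]]].
  exists g. split; [exact Fg|]. specialize (HWV _ _ Wg Vc').
  rewrite phi_hom, <- tg_mulA, mulgV, mulg1 in HWV. exact HWV.
Qed.

End Strip.

Lemma escaping_limit_of_CAC (C A : G -> Prop) (h : H) :
  compact C ->
  (forall W, tg_open W -> W h -> forall K, compact K ->
     exists c1 a c2, C c1 /\ A a /\ C c2 /\ ~ K a /\ W (phi (tg_mul (tg_mul c1 a) c2))) ->
  exists h', escaping_limit A h'.
Proof.
  intros HC Hesc.
  destruct (escape_strip_left C (fun K g => exists a c2, A a /\ ~ K a /\ C c2 /\ g = tg_mul a c2)
              HC ltac:(intros K K' g HKK' [a [c2 [? [? [? ?]]]]]; exists a, c2; repeat split; auto) h)
    as [c1 [_ Hleft]].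
  { intros W HW Wh K HK. destruct (Hesc W HW Wh K HK) as [c1 [a [c2 [? [? [? [? Wg]]]]]]].
    exists c1, (tg_mul a c2). rewrite <- tg_mulA in Wg. split; [|split; [exists a, c2|]]; auto. }
  destruct (escape_strip_right C (fun K a => A a /\ ~ K a)
              HC ltac:(intros K K' a HKK' [? ?]; split; auto) (tg_mul (tg_inv (phi c1)) h)) as [c2 [_ Hright]].
  { intros W HW Wh K HK. destruct (Hleft W HW Wh K HK) as [g [[a [c2 [? [? [? ->]]]]] Wg]].
    exists c2, a. auto. }
  exists (tg_mul (tg_mul (tg_inv (phi c1)) h) (tg_inv (phi c2))).
  intros W HW Wh K HK. destruct (Hright W HW Wh K HK) as [a [[? ?] ?]]. exists a. auto.
Qed.

Hypothesis phi_inj : forall x y, phi x = phi y -> x = y.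

(* [phi (b d)^-1 phi x phi (b d)] tends both to [1] and to [h^-1 phi x h]. *)
Lemma Uplus_trivial (D : Type) (le : D -> D -> Prop) (b : D -> G) (h : H) (x : G) :
  directed le -> net_conv H le (fun d => phi (b d)) h -> Uplus G le b x -> x = tg_one.
Proof.
  intros Hdir Hb Hx.
  assert (Hconj1 : net_conv H le
            (fun d => tg_mul (tg_mul (tg_inv (phi (b d))) (phi x)) (phi (b d))) tg_one).
  { rewrite <- (hom_one G H phi phi_hom).
    replace (fun d => tg_mul (tg_mul (tg_inv (phi (b d))) (phi x)) (phi (b d)))
      with (fun d => phi (tg_mul (tg_mul (tg_inv (b d)) x) (b d))).
    - exact (net_conv_continuous G H phi D le _ _ phi_cont Hx).
    - apply functional_extensionality; intro d. rewrite !phi_hom, hom_inv; auto. }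
  pose proof (net_conv_unique H D le _ _ _ H_hausdorff Hdir
                (net_conv_conj H D le _ h (phi x) Hb) Hconj1) as E.
  apply phi_inj. rewrite (hom_one G H phi phi_hom). exact (conjg_eq1 H _ _ E).
Qed.

Lemma no_escaping_limit (A : G -> Prop) (h : H) :
  hausdorff G ->
  (forall (D : Type) (le : D -> D -> Prop) (a : D -> G),
      directed le -> (forall d, A (a d)) -> net_to_infty G le a ->
      exists (D' : Type) (le' : D' -> D' -> Prop) (b : D' -> G),
        directed le' /\ subnet G le le' a b /\ ~ precompact G (Uplus G le' b)) ->
  ~ escaping_limit A h.
Proof.
  intros HG Hnet Hesc.
  destruct (escaping_limit_net A h Hesc) as [D [le [a [Hdir [HA [Hinf Hconv]]]]]].
  destruct (Hnet D le a Hdir HA Hinf) as [D' [le' [b [Hdir' [Hsub Hnpc]]]]].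
  apply Hnpc, compact_subsingleton. intros x y Hx Hy.
  pose proof (subnet_net_conv G H phi D D' le le' a b h Hsub Hconv) as Hbconv.
  rewrite (closure_sub_point G _ tg_one x HG (fun z => Uplus_trivial D' le' b h z Hdir' Hbconv) Hx).
  rewrite (closure_sub_point G _ tg_one y HG (fun z => Uplus_trivial D' le' b h z Hdir' Hbconv) Hy).
  reflexivity.
Qed.

Lemma closure_image (P : G -> Prop) (h : H) :
  qss G -> closure H (image P) h -> exists x, closure G P x /\ phi x = h.
Proof.
  intros [[HG _] [A [_ [_ [C [HC [Hdec Hnet]]]]]]] Hh. apply NNPP; intro Hno.
  destruct (escaping_limit_of_CAC C A h HC) as [h' Hesc].
  - intros W HW Wh K HK.
    set (CKC := fun z => exists u c2, (exists c1 a, C c1 /\ K a /\ u = tg_mul c1 a) /\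
                                     C c2 /\ z = tg_mul u c2).
    assert (Havoid : exists W0, tg_open W0 /\ W0 h /\ forall g, CKC g -> P g -> ~ W0 (phi g)).
    { apply NNPP; intro Hn. apply Hno.
      apply (compact_closure_image CKC P h (compact_mul G _ _ (compact_mul G _ _ HC HK) HC)).
      intros W0 HW0 W0h. apply NNPP; intro Hg. apply Hn.
      exists W0. split; [|split]; auto. intros g CKCg Pg W0g. apply Hg. eauto. }
    destruct Havoid as [W0 [HW0 [W0h HW0P]]].
    destruct (Hh (fun y => W y /\ W0 y) (tg_open_inter H W W0 HW HW0) (conj Wh W0h))
      as [y [[Wy W0y] [g [Pg ->]]]].
    destruct (Hdec g) as [c1 [a [c2 [Cc1 [Aa [Cc2 ->]]]]]].
    exists c1, a, c2. split; [|split; [|split; [|split]]]; auto.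
    intro Ka. apply (HW0P _ ltac:(exists (tg_mul c1 a), c2; split; [exists c1, a|]; auto) Pg W0y).
  - refine (no_escaping_limit A h' HG _ Hesc).
    intros D le a Hdir HA Hinf.
    destruct (Hnet D le a Hdir HA Hinf) as [D' [le' [b [? [? [? _]]]]]].
    exists D', le', b. auto.
Qed.

End Embedding.

Theorem theorem5p1 (G H : TopGroup) (phi : G -> H) :
  qss G -> hausdorff H -> continuous phi -> group_hom phi ->
  (forall x y, phi x = phi y -> x = y) ->
  closed (fun y : H => exists x, y = phi x) /\
  (forall U : G -> Prop, tg_open U ->
     exists V : H -> Prop, tg_open V /\
       forall y, (exists x, U x /\ y = phi x) <-> (V y /\ exists x, y = phi x)).
Proof.
  intros Hq HH Hc Hhom Hinj.
  pose proof (fun P h => closure_image G H phi HH Hc Hhom Hinj P h Hq) as Hclosed_map.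
  split.
  - apply open_of_nbhd. intros y Hy. apply NNPP; intro Hn.
    destruct (Hclosed_map (fun _ => True) y) as [x [_ Ex]].
    + intros W HW Wy. apply NNPP; intro Hw. apply Hn.
      exists W. split; [exact HW|split; [exact Wy|]].
      intros z Wz [x ->]. apply Hw. exists (phi x). split; [|exists x]; auto.
    + apply Hy. exists x. auto.
  - intros U HU. exists (fun y => exists W, (tg_open W /\ forall x, W (phi x) -> U x) /\ W y).
    split; [apply tg_open_union; intros W [HW _]; exact HW|].
    intro y. split.
    + intros [x [Ux ->]]. split; [|exists x; reflexivity]. apply NNPP; intro Hn.
      destruct (Hclosed_map (fun g => ~ U g) (phi x)) as [z [Hz Ez]].
      * intros W HW Wx. apply NNPP; intro Hw. apply Hn.
        exists W. split; [split; [exact HW|]|exact Wx].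
        intros x' Wx'. apply NNPP; intro nUx'. apply Hw. exists (phi x'). split; [|exists x']; auto.
      * rewrite (Hinj _ _ Ez) in Hz. destruct (Hz U HU Ux) as [g [Ug nUg]]. exact (nUg Ug).
    + intros [[W [[_ HWU] Wy]] [x ->]]. exists x. auto.
Qed.
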